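(* For every program $C$ and runtimes $f,g\in\mathbb{T}$ with $\mathrm{mod}(C)\cap\mathrm{Vars}(g)=\emptyset$, $$\mathsf{ert}[\![C]\!](f\oplus g)\;\preceq\;\mathsf{ert}[\![C]\!](f)\oplus g .$$
   Context: States and programs. Fix a finite set $\mathrm{Vars}$ of variables; values are $\mathbb{N}$, locations are $\mathbb{N}_{>0}$. A stack is $s\colon \mathrm{Vars}\to\mathbb{N}$; a heap is a partial map $h$ from a finite set $\mathrm{dom}(h)\subseteq\mathbb{N}_{>0}$ to $\mathbb{N}$. $h_1\perp h_2$ means disjoint domains; then $h_1\star h_2$ is their union; $h_\emptyset$ is the empty heap. $\mathsf{States}$ is the set of pairs $(s,h)$. $s(e)$ is the value of a (heap-independent) arithmetic expression $e$ under $s$, $s\models\varphi$ means the Boolean expression $\varphi$ holds under $s$, $s[x\mapsto v]$ is the updated stack. Programs are generated by $C ::= \mathtt{tick}(e) \mid x:=e \mid x:=\mathtt{alloc}(e) \mid \langle e\rangle:=e' \mid x:=\langle e\rangle \mid \mathtt{free}(e) \mid \{C\}[p]\{C\} \mid \mathtt{if}(\varphi)\{C\}\mathtt{else}\{C\} \mid C;C \mid \mathtt{while}(\varphi)\{C\}$, where $p$ is an expression with $s(p)\in[0,1]\cap\mathbb{Q}$ for all $s$. $\mathrm{mod}(C)$ is the set of variables potentially modified by $C$, i.e. the variables $x$ occurring as the target of $x:=e$, $x:=\mathtt{alloc}(e)$ or $x:=\langle e\rangle$ in $C$. For a runtime $g$, $x\notin\mathrm{Vars}(g)$ means $g(s[x\mapsto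 v],h)=g(s,h)$ for all $(s,h)$ and $v$. Runtimes. $\mathbb{T}$ is the set of functions $\mathsf{States}\to[0,\infty]$, ordered pointwise by $\preceq$; arithmetic is pointwise with $0\cdot\infty=0$. $[\varphi]$ is the $0/1$-valued Iverson bracket. Truncated subtraction: $a\dot- b=\max(a-b,0)$, $\infty\dot- b=\infty$ for finite $b$, $a\dot-\infty=0$. $(f\oplus g)(s,h)=\min\{f(s,h_1)+g(s,h_2)\mid h=h_1\star h_2\}$; $(f \mathbin{-\!\!\ominus} g)(s,h)=\sup\{g(s,h\star h')\dot- f(s,h')\mid h'\perp h\}$; $(\inf y\colon f)(s,h)=\inf_{v\in\mathbb{N}} f(s[y\mapsto v],h)$, $(\sup y\colon f)(s,h)=\sup_{v\in\mathbb{N}}f(s[y\mapsto v],h)$; $f[x/e](s,h)=f(s[x\mapsto s(e)],h)$. $\mathsf{tm}(e)(s,h)=s(e)$ if $h=h_\emptyset$, else $\infty$; $[e\mapsto e'](s,h)=0$ if $\mathrm{dom}(h)=\{s(e)\}$ and $h(s(e))=s(e')$, else $\infty$; $[e\mapsto -](s,h)=0$ if $\mathrm{dom}(h)=\{s(e)\}$, else $\infty$; $\bigoplus_{i=1}^{e} f_i$ is the separating sum over $i=1,\dots,s(e)$ (empty one: $[\mathsf{emp}]$, which is $0$ if $h=h_\emptyset$, else $\infty$). Expected runtime transformer $\mathsf{ert}[\![C]\!]\colon\mathbb{T}\to\mathbb{T}$ (with $v$ fresh): $\mathsf{ert}[\![\mathtt{tick}(e)]\!](f)=\mathsf{tm}(e)\oplus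 f$; $\mathsf{ert}[\![x:=e]\!](f)=f[x/e]$; $\mathsf{ert}[\![x:=\mathtt{alloc}(e)]\!](f)=\sup v\colon (\bigoplus_{i=1}^{e}[v+i-1\mapsto 0])\mathbin{-\!\!\ominus} f[x/v]$; $\mathsf{ert}[\![\langle e\rangle:=e']\!](f)=[e\mapsto-]\oplus([e\mapsto e']\mathbin{-\!\!\ominus} f)$; $\mathsf{ert}[\![x:=\langle e\rangle]\!](f)=\inf v\colon [e\mapsto v]\oplus([e\mapsto v]\mathbin{-\!\!\ominus} f[x/v])$; $\mathsf{ert}[\![\mathtt{free}(e)]\!](f)=[e\mapsto-]\oplus f$; $\mathsf{ert}[\![C_1;C_2]\!](f)=\mathsf{ert}[\![C_1]\!](\mathsf{ert}[\![C_2]\!](f))$; conditional: $[\varphi]\cdot\mathsf{ert}[\![C_1]\!](f)+[\neg\varphi]\cdot\mathsf{ert}[\![C_2]\!](f)$; probabilistic choice: $p\cdot\mathsf{ert}[\![C_1]\!](f)+(1-p)\cdot\mathsf{ert}[\![C_2]\!](f)$; $\mathsf{ert}[\![\mathtt{while}(\varphi)\{C\}]\!](f)=\mathrm{lfp}\, g.\ [\neg\varphi]\cdot f+[\varphi]\cdot\mathsf{ert}[\![C]\!](g)$ (least fixed point in $(\mathbb{T},\preceq)$). *)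

From HB Require Import structures.
From mathcomp Require Import all_boot all_order all_algebra.
From mathcomp Require Import finmap.
From mathcomp Require Import all_classical all_reals.
From mathcomp Require Import ereal Rstruct.
Set Implicit Arguments. Unset Strict Implicit. Unset Printing Implicit Defensive.
Import Order.TTheory GRing.Theory Num.Theory.
Local Open Scope classical_set_scope.
Local Open Scope ring_scope.
Local Open Scope ereal_scope.


Notation Real := Rdefinitions.R.

Definition stack (V : finType) := V -> nat.

Definition heap := {h : {fmap nat -> nat} | 0%N \notin domf h}.

Definition state (V : finType) := (stack V * heap)%type.

Definition upd (V : finType) (s : stack V) (x : V) (v : nat) : stack V :=
  fun y => if y == x then v else s y.

Definition hdisj (h1 h2 : heap) : Prop := fdisjoint (domf (val h1)) (domf (val h2)).
Definition hsplit (h h1 h2 : heap) : Prop :=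
  hdisj h1 h2 /\ val h = catf (val h1) (val h2).

(* heap-independent expressions, Boolean expressions, probability expressions
   are given by their (stack-)semantics *)
Definition aexp (V : finType) := stack V -> nat.
Definition bexp (V : finType) := stack V -> bool.

Inductive prog (V : finType) : Type :=
| Tick   : aexp V -> prog V
| Assign : V -> aexp V -> prog V
| Alloc  : V -> aexp V -> prog V
| Store  : aexp V -> aexp V -> prog V
| Lookup : V -> aexp V -> prog V
| Free   : aexp V -> prog V
| PChoice : forall p : stack V -> rat,
     (forall s, (0 <= p s <= 1)%R) -> prog V -> prog V -> prog V
| Ite    : bexp V -> prog V -> prog V -> prog V
| Seq    : prog V -> prog V -> prog V
| While  : bexp V -> prog V -> prog V.

Fixpoint modv (V : finType) (C : prog V) : seq V :=
  match C with
  | Tick _ => [::]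
  | Assign x _ => [:: x]
  | Alloc x _ => [:: x]
  | Store _ _ => [::]
  | Lookup x _ => [:: x]
  | Free _ => [::]
  | PChoice _ _ C1 C2 => modv C1 ++ modv C2
  | Ite _ C1 C2 => modv C1 ++ modv C2
  | Seq C1 C2 => modv C1 ++ modv C2
  | While _ C1 => modv C1
  end.

(* runtimes States -> [0,oo], represented in \bar R; nonnegativity is a separate predicate *)
Definition runtime (V : finType) := state V -> \bar Real.
Definition nonneg_rt (V : finType) (f : runtime V) : Prop := forall st, 0 <= f st.
Definition rt_le (V : finType) (f g : runtime V) : Prop := forall st, f st <= g st.

Definition not_in_vars (V : finType) (x : V) (g : runtime V) : Prop :=
  forall (s : stack V) (h : heap) (v : nat), g (upd s x v, h) = g (s, h).

Definition tsub (a b : \bar Real) : \bar Real :=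
  if b == +oo then 0 else maxe (a - b) 0.

Definition sepsum (V : finType) (f g : runtime V) : runtime V :=
  fun st => ereal_inf [set r | exists (h1 h2 : heap),
              hsplit st.2 h1 h2 /\ r = f (st.1, h1) + g (st.1, h2)].

Definition sepsub (V : finType) (f g : runtime V) : runtime V :=
  fun st => ereal_sup [set r | exists (h' hh : heap),
              hdisj st.2 h' /\ hsplit hh st.2 h' /\ r = tsub (g (st.1, hh)) (f (st.1, h'))].

Definition inf_nat (V : finType) (F : nat -> runtime V) : runtime V :=
  fun st => ereal_inf [set r | exists v : nat, r = F v st].
Definition sup_nat (V : finType) (F : nat -> runtime V) : runtime V :=
  fun st => ereal_sup [set r | exists v : nat, r = F v st].

Definition subst (V : finType) (f : runtime V) (x : V) (e : aexp V) : runtime V :=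
  fun st => f (upd st.1 x (e st.1), st.2).

Definition hemp_val : {fmap nat -> nat} := [fmap]%fmap.

Definition tm (V : finType) (e : aexp V) : runtime V :=
  fun st => if val st.2 == hemp_val then ((e st.1)%:R)%:E else +oo.
Definition emp (V : finType) : runtime V :=
  fun st => if val st.2 == hemp_val then 0 else +oo.
Definition pto (V : finType) (e e' : aexp V) : runtime V :=
  fun st => if (domf (val st.2) == [fset e st.1]%fset) &&
               ((val st.2).[? e st.1] == Some (e' st.1))%fmap then 0 else +oo.
Definition pto_any (V : finType) (e : aexp V) : runtime V :=
  fun st => if domf (val st.2) == [fset e st.1]%fset then 0 else +oo.

Fixpoint bigsep (V : finType) (n : nat) (F : nat -> runtime V) : runtime V :=
  match n with
  | 0%N => @emp V
  | n'.+1 => sepsum (bigsep n' F) (F n'.+1)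
  end.

(* least fixed point in ([0,oo]^States, ⪯): the pointwise infimum of all
   (nonnegative) prefixed points (Knaster–Tarski) *)
Definition lfp (V : finType) (Phi : runtime V -> runtime V) : runtime V :=
  fun st => ereal_inf [set r | exists g : runtime V, nonneg_rt g /\ rt_le (Phi g) g /\ r = g st].

Definition cst (V : finType) (n : nat) : aexp V := fun _ => n.

Fixpoint ert (V : finType) (C : prog V) (f : runtime V) : runtime V :=
  match C with
  | Tick e => sepsum (tm e) f
  | Assign x e => subst f x e
  | Alloc x e => sup_nat (fun v =>
      sepsub (fun st => bigsep (e st.1)
                          (fun i => pto (@cst V (v + i - 1)%N) (@cst V 0)) st)
             (subst f x (@cst V v)))
  | Store e e' => sepsum (pto_any e) (sepsub (pto e e') f)
  | Lookup x e => inf_nat (fun v =>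
      sepsum (pto e (@cst V v)) (sepsub (pto e (@cst V v)) (subst f x (@cst V v))))
  | Free e => sepsum (pto_any e) f
  | PChoice p _ C1 C2 => fun st =>
      (ratr (p st.1) : Real)%:E * ert C1 f st
      + (1 - ratr (p st.1) : Real)%:E * ert C2 f st
  | Ite phi C1 C2 => fun st =>
      if phi st.1 then ert C1 f st else ert C2 f st
  | Seq C1 C2 => ert C1 (ert C2 f)
  | While phi C1 => lfp (fun X st => if phi st.1 then ert C1 X st else f st)
  end.

From HB Require Import structures.
From mathcomp Require Import all_boot all_order all_algebra.
From mathcomp Require Import finmap.
From mathcomp Require Import all_classical all_reals.
From mathcomp Require Import ereal Rstruct.
Set Implicit Arguments. Unset Strict Implicit. Unset Printing Implicit Defensive.
Import Order.TTheory GRing.Theory Num.Theory.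

(* For the heap commands the frame property is an
   algebraic law of the separating connectives: [⊕] is associative (as an
   inequality), [P −⊖ (f ⊕ g) ⪯ (P −⊖ f) ⊕ g] because the heap part carrying [g]
   can be kept outside the extension [h'], and [(f ⊕ g)[x/e] = f[x/e] ⊕ g] since
   [g] does not read [x]. Probabilistic choice follows from convexity, sequencing
   from monotonicity of ert, and loops by Park induction: [lfp(Φ_f) ⊕ g] is a
   prefixed point of the loop functional [Φ_{f ⊕ g}]. *)

Lemma heap_cat_ok (a b : heap) : 0%N \notin domf (catf (val a) (val b)).
Proof. by rewrite domf_cat inE negb_or (valP a) (valP b). Qed.

Definition hcat (a b : heap) : heap :=
  exist (fun h => 0%N \notin domf h) _ (heap_cat_ok a b).

Lemma hemp_ok : 0%N \notin domf hemp_val.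
Proof. by rewrite domf0. Qed.

Definition hemp : heap := exist (fun h => 0%N \notin domf h) _ hemp_ok.

Lemma hsplit_hemp (h : heap) : hsplit h h hemp.
Proof.
split; last by rewrite /= /hemp_val catf0.
by apply/fdisjointP => x _; rewrite inE.
Qed.

Lemma hsplitA (h a b c d : heap) : hsplit h a b -> hsplit a c d ->
  exists db : heap, hsplit db d b /\ hsplit h c db.
Proof.
move=> [dab eh] [dcd ea]; exists (hcat d b).
have ddb : hdisj d b.
  by apply: fdisjointWl dab; rewrite ea domf_cat fsubsetUr.
split=> //; split; last by rewrite eh ea catfA.
rewrite /hdisj domf_cat fdisjointXU dcd /=.
by apply: fdisjointWl dab; rewrite ea domf_cat fsubsetUl.
Qed.

Lemma hsplitAC (h h' hh a b : heap) : hdisj h h' -> hsplit hh h h' ->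
  hsplit h a b -> hdisj a h' /\ exists ah : heap, hsplit ah a h' /\ hsplit hh ah b.
Proof.
move=> dhh' [_ ehh] [dab eh].
have dah : hdisj a h'.
  by apply: fdisjointWl dhh'; rewrite eh domf_cat fsubsetUl.
have dbh : hdisj b h'.
  by apply: fdisjointWl dhh'; rewrite eh domf_cat fsubsetUr.
split=> //; exists (hcat a h'); split=> //; split.
  by rewrite /hdisj domf_cat fdisjointUX dab fdisjoint_sym dbh.
by rewrite ehh eh disjoint_catfAC.
Qed.

Local Open Scope ereal_scope.

Lemma tsub_ge0 (a b : \bar Rdefinitions.R) : 0 <= tsub a b.
Proof. by rewrite /tsub; case: ifP => // _; rewrite le_max lexx orbT. Qed.

Lemma le_tsub2r (a a' b : \bar Rdefinitions.R) : a <= a' -> tsub a b <= tsub a' b.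
Proof.
move=> le; rewrite /tsub; case: ifP => // _.
by rewrite ge_max le_max (leeD2r _ le) le_max lexx orbT.
Qed.

Lemma tsubDl_le (x y b : \bar Rdefinitions.R) : 0 <= x -> 0 <= y ->
  tsub (x + y) b <= tsub x b + y.
Proof.
move=> x0 y0; rewrite /tsub; case: ifP => _; first by rewrite add0e.
rewrite ge_max adde_ge0 ?le_max ?lexx ?orbT // andbT addeAC.
by rewrite leeD2r // le_max lexx.
Qed.

(* The nonnegativity of [B] rules out [ereal_inf B = -oo] when [y = +oo]. *)
Lemma le_ereal_infDr (x y : \bar Rdefinitions.R) (B : set (\bar Rdefinitions.R)) :
  (forall b, B b -> x <= b + y) -> (forall b, B b -> 0 <= b) -> 0 <= y ->
  x <= ereal_inf B + y.
Proof.
case: y => [r| |] le B0 y0 //.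
  by rewrite -leeBlDr //; apply: le_ereal_inf_tmp => b Bb; rewrite leeBlDr ?le.
have inf_ge0 : 0 <= ereal_inf B by apply: le_ereal_inf_tmp.
by rewrite addey ?leey //; apply: contraTneq inf_ge0 => ->.
Qed.

Lemma ratr_weights_ge0 (p : rat) : (0 <= p <= 1)%R ->
  (0 <= (ratr p : Rdefinitions.R))%R /\ (0 <= 1 - (ratr p : Rdefinitions.R))%R.
Proof.
move=> /andP[p0 p1]; split; first by rewrite ler0q.
by rewrite subr_ge0 -(rmorph1 (@ratr Rdefinitions.R)) ler_rat.
Qed.

Section Runtimes.
Variable V : finType.
Implicit Types (f g A B F G X Y : runtime V) (Phi : runtime V -> runtime V).

Lemma rt_le_trans f g F : rt_le f g -> rt_le g F -> rt_le f F.
Proof. by move=> fg gF st; apply: le_trans (fg st) (gF st). Qed.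

Lemma le_sepsum2r F G g s h : (forall a, F (s, a) <= G (s, a)) ->
  sepsum F g (s, h) <= sepsum G g (s, h).
Proof.
move=> FG; apply: le_ereal_inf_tmp => _ [h1 [h2 [sp ->]]].
apply: le_trans (leeD2r _ (FG h1)).
by apply: ereal_inf_lbound; exists h1, h2.
Qed.

Lemma le_sepsum2l F g1 g2 s h : (forall b, g1 (s, b) <= g2 (s, b)) ->
  sepsum F g1 (s, h) <= sepsum F g2 (s, h).
Proof.
move=> le12; apply: le_ereal_inf_tmp => _ [h1 [h2 [sp ->]]].
apply: le_trans (leeD2l _ (le12 h2)).
by apply: ereal_inf_lbound; exists h1, h2.
Qed.

Lemma le_sepsub2l F f1 f2 s h : (forall a, f1 (s, a) <= f2 (s, a)) ->
  sepsub F f1 (s, h) <= sepsub F f2 (s, h).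
Proof.
move=> le12; apply: ge_ereal_sup => _ [h' [hh [d [sp ->]]]].
apply: le_trans (le_tsub2r _ (le12 hh)) _.
by apply: ereal_sup_ubound; exists h', hh.
Qed.

Lemma sepsum_ge0 F g : nonneg_rt F -> nonneg_rt g -> nonneg_rt (sepsum F g).
Proof.
move=> F0 g0 st; apply: le_ereal_inf_tmp => _ [h1 [h2 [_ ->]]].
exact: adde_ge0.
Qed.

Lemma sepsub_ge0 F f : nonneg_rt (sepsub F f).
Proof.
move=> [s h]; apply: le_trans (tsub_ge0 (f (s, h)) (F (s, hemp))) _.
by apply: ereal_sup_ubound; exists hemp, h; have [] := hsplit_hemp h.
Qed.

Lemma sepsumA_le A B g : nonneg_rt A -> nonneg_rt B -> nonneg_rt g ->
  rt_le (sepsum A (sepsum B g)) (sepsum (sepsum A B) g).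
Proof.
move=> A0 B0 g0 [s h]; apply: le_ereal_inf_tmp => _ [a [b [sab ->]]] /=.
apply: le_ereal_infDr => [_ [c [d [scd ->]]]| _ [c [d [_ ->]]] |] //; last first.
  exact: adde_ge0.
have [db [sdb shc]] := hsplitA sab scd.
apply: le_trans (_ : _ <= A (s, c) + sepsum B g (s, db)) _.
  by apply: ereal_inf_lbound; exists c, db.
by rewrite -addeA leeD2l //; apply: ereal_inf_lbound; exists d, b.
Qed.

Lemma sepsub_sepsum_le F f g : nonneg_rt f -> nonneg_rt g ->
  rt_le (sepsub F (sepsum f g)) (sepsum (sepsub F f) g).
Proof.
move=> f0 g0 [s h]; apply: ge_ereal_sup => _ [h' [hh [dh [sp ->]]]].
apply: le_ereal_inf_tmp => _ [a [b [sab ->]]] /=.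
have [dah [ah [sah shh]]] := hsplitAC dh sp sab.
apply: le_trans (le_tsub2r _ (_ : _ <= f (s, ah) + g (s, b))) _.
  by apply: ereal_inf_lbound; exists ah, b.
apply: le_trans (tsubDl_le _ _ _) _ => //.
by rewrite leeD2r //; apply: ereal_sup_ubound; exists h', ah.
Qed.

Lemma subst_sepsum_le f g x e : not_in_vars x g ->
  rt_le (subst (sepsum f g) x e) (sepsum (subst f x e) g).
Proof.
move=> gx [s h]; apply: le_ereal_inf_tmp => _ [a [b [sab ->]]] /=.
by apply: ereal_inf_lbound; exists a, b; rewrite /subst /= gx.
Qed.

Lemma sup_nat_sepsum_le (F : nat -> runtime V) g :
  rt_le (sup_nat (fun v => sepsum (F v) g)) (sepsum (sup_nat F) g).
Proof.
move=> [s h]; apply: ge_ereal_sup => _ [v ->].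
by apply: le_sepsum2r => a; apply: ereal_sup_ubound; exists v.
Qed.

Lemma inf_nat_sepsum_le (F : nat -> runtime V) g :
  (forall v, nonneg_rt (F v)) -> nonneg_rt g ->
  rt_le (inf_nat (fun v => sepsum (F v) g)) (sepsum (inf_nat F) g).
Proof.
move=> F0 g0 [s h]; apply: le_ereal_inf_tmp => _ [a [b [sab ->]]] /=.
apply: le_ereal_infDr => [_ [v ->]| _ [v ->] |] //; last exact: F0.
apply: le_trans (ereal_inf_lbound _) _; first by exists v.
by apply: ereal_inf_lbound; exists a, b.
Qed.

Lemma convex_sepsum_le A B g (p q : Rdefinitions.R) s h :
  (0 <= p)%R -> (0 <= q)%R -> (p + q = 1)%R ->
  nonneg_rt A -> nonneg_rt B -> nonneg_rt g ->
  p%:E * sepsum A g (s, h) + q%:E * sepsum B g (s, h) <=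
  sepsum (fun st => p%:E * A st + q%:E * B st) g (s, h).
Proof.
move=> p0 q0 pq A0 B0 g0; apply: le_ereal_inf_tmp => _ [a [b [sab ->]]] /=.
apply: le_trans (_ : _ <= p%:E * (A (s, a) + g (s, b)) + q%:E * (B (s, a) + g (s, b))) _.
  by apply: leeD; apply: lee_wpmul2l => //; apply: ereal_inf_lbound; exists a, b.
by rewrite !ge0_muleDr // addeACA -ge0_muleDl // -EFinD pq mul1e.
Qed.

Lemma lfp_ge0 Phi : nonneg_rt (lfp Phi).
Proof. by move=> st; apply: le_ereal_inf_tmp => _ [Y [Y0 [_ ->]]]. Qed.

Lemma lfp_le Phi Y : nonneg_rt Y -> rt_le (Phi Y) Y -> rt_le (lfp Phi) Y.
Proof. by move=> Y0 PY st; apply: ereal_inf_lbound; exists Y. Qed.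

Lemma lfp_prefixed Phi : (forall X Y, rt_le X Y -> rt_le (Phi X) (Phi Y)) ->
  rt_le (Phi (lfp Phi)) (lfp Phi).
Proof.
move=> mono st; apply: le_ereal_inf_tmp => _ [Y [Y0 [PY ->]]].
exact: le_trans (mono _ _ (lfp_le Y0 PY) st) (PY st).
Qed.

Lemma le_lfp Phi1 Phi2 : (forall X, rt_le (Phi1 X) (Phi2 X)) ->
  rt_le (lfp Phi1) (lfp Phi2).
Proof.
move=> le12 st; apply: le_ereal_inf_tmp => _ [Y [Y0 [PY ->]]].
by apply: lfp_le Y0 (rt_le_trans (le12 Y) PY) st.
Qed.

Lemma tm_ge0 (e : aexp V) : nonneg_rt (tm e).
Proof. by move=> st; rewrite /tm; case: ifP; rewrite ?lee_fin. Qed.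

Lemma pto_ge0 (e e' : aexp V) : nonneg_rt (pto e e').
Proof. by move=> st; rewrite /pto; case: ifP. Qed.

Lemma pto_any_ge0 (e : aexp V) : nonneg_rt (pto_any e).
Proof. by move=> st; rewrite /pto_any; case: ifP. Qed.

Lemma ert_ge0 (C : prog V) f : nonneg_rt f -> nonneg_rt (ert C f).
Proof.
elim: C f => [e|x e|x e|e e'|x e|e|p hp C1 IH1 C2 IH2|b C1 IH1 C2 IH2|C1 IH1 C2 IH2|b C1 IH1]
  f f0 [s h] /=.
- exact/sepsum_ge0/f0/tm_ge0.
- exact: f0.
- by apply: le_trans (sepsub_ge0 _ _ (s, h)) _; apply: ereal_sup_ubound; exists 0%N.
- exact/sepsum_ge0/sepsub_ge0/pto_any_ge0.
- by apply: le_ereal_inf_tmp => _ [v ->]; apply/sepsum_ge0/sepsub_ge0/pto_ge0.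
- exact/sepsum_ge0/f0/pto_any_ge0.
- have [p0 q0] := ratr_weights_ge0 (hp s).
  by apply: adde_ge0; apply: mule_ge0; rewrite ?lee_fin ?IH1 ?IH2.
- by case: (b s); [apply: IH1 | apply: IH2].
- exact/IH1/IH2.
- exact: lfp_ge0.
Qed.

Lemma ert_mono (C : prog V) f1 f2 : rt_le f1 f2 -> rt_le (ert C f1) (ert C f2).
Proof.
elim: C f1 f2 => [e|x e|x e|e e'|x e|e|p hp C1 IH1 C2 IH2|b C1 IH1 C2 IH2|C1 IH1 C2 IH2|b C1 IH1]
  f1 f2 le12 [s h] /=.
- by apply: le_sepsum2l => a; apply: le12.
- exact: le12.
- apply: ge_ereal_sup => _ [v ->].
  apply: le_trans (ereal_sup_ubound _); last by exists v.
  by apply: le_sepsub2l => a; apply: le12.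
- by apply: le_sepsum2l => a; apply: le_sepsub2l => a'; apply: le12.
- apply: le_ereal_inf_tmp => _ [v ->].
  apply: le_trans (ereal_inf_lbound _) _; first by exists v.
  by apply: le_sepsum2l => a; apply: le_sepsub2l => a'; apply: le12.
- by apply: le_sepsum2l => a; apply: le12.
- have [p0 q0] := ratr_weights_ge0 (hp s).
  by apply: leeD; apply: lee_wpmul2l; rewrite ?lee_fin ?IH1 ?IH2.
- by case: (b s); [apply: IH1 | apply: IH2].
- exact/IH1/IH2.
- by apply: le_lfp => X st; case: ifP => _ //; apply: le12.
Qed.

Section Frame.
Variable g : runtime V.
Hypothesis g0 : nonneg_rt g.

Definition frames (C : prog V) f := rt_le (ert C (sepsum f g)) (sepsum (ert C f) g).

Lemma subst_sepsub_le F f x e : nonneg_rt f -> not_in_vars x g ->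
  rt_le (sepsub F (subst (sepsum f g) x e)) (sepsum (sepsub F (subst f x e)) g).
Proof.
move=> f0 gx; apply: rt_le_trans (sepsub_sepsum_le _ _ g0); last by move=> st; apply: f0.
by move=> [s h]; apply: le_sepsub2l => a; apply: subst_sepsum_le.
Qed.

Lemma alloc_frame x e f : nonneg_rt f -> not_in_vars x g -> frames (Alloc x e) f.
Proof.
move=> f0 gx; apply: rt_le_trans (sup_nat_sepsum_le _ _) => st.
apply: ge_ereal_sup => _ [v ->]; apply: le_trans (subst_sepsub_le _ _ f0 gx st) _.
by apply: ereal_sup_ubound; exists v.
Qed.

Lemma store_frame e e' f : nonneg_rt f -> frames (Store e e') f.
Proof.
move=> f0; apply: rt_le_trans (sepsumA_le (@pto_any_ge0 _) (@sepsub_ge0 _ _) g0).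
by move=> [s h]; apply: le_sepsum2l => a; apply: sepsub_sepsum_le.
Qed.

Lemma lookup_frame x e f : nonneg_rt f -> not_in_vars x g -> frames (Lookup x e) f.
Proof.
move=> f0 gx; apply: rt_le_trans (inf_nat_sepsum_le _ g0); last first.
  by move=> v; apply/sepsum_ge0/sepsub_ge0/pto_ge0.
move=> st; apply: le_ereal_inf_tmp => _ [v ->].
apply: le_trans (ereal_inf_lbound _) _; first by exists v.
apply: le_trans (sepsumA_le (@pto_ge0 _ _) (@sepsub_ge0 _ _) g0 st).
by case: st => s h; apply: le_sepsum2l => a; apply: subst_sepsub_le.
Qed.

Lemma pchoice_frame p hp C1 C2 f : nonneg_rt f -> frames C1 f -> frames C2 f ->
  frames (@PChoice V p hp C1 C2) f.
Proof.
move=> f0 fr1 fr2 [s h] /=; have [p0 q0] := ratr_weights_ge0 (hp s).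
apply: le_trans (convex_sepsum_le _ _ p0 q0 _ (ert_ge0 C1 f0) (ert_ge0 C2 f0) g0).
  by apply: leeD; apply: lee_wpmul2l; rewrite ?lee_fin ?fr1 ?fr2.
by rewrite addrC subrK.
Qed.

Lemma ite_frame b C1 C2 f : frames C1 f -> frames C2 f -> frames (Ite b C1 C2) f.
Proof.
move=> fr1 fr2 [s h] /=; case: ifP => bs.
  by apply: le_trans (fr1 _) _; apply: le_sepsum2r => a; rewrite bs.
by apply: le_trans (fr2 _) _; apply: le_sepsum2r => a; rewrite bs.
Qed.

Lemma seq_frame C1 C2 f : frames C1 (ert C2 f) -> frames C2 f -> frames (Seq C1 C2) f.
Proof. by move=> fr1 fr2; apply: rt_le_trans (ert_mono C1 fr2) fr1. Qed.

Lemma while_frame b C f : nonneg_rt f -> (forall X, nonneg_rt X -> frames C X) ->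
  frames (While b C) f.
Proof.
move=> f0 frC.
pose Phi X (st : state V) := if b st.1 then ert C X st else f st.
have pre : rt_le (Phi (lfp Phi)) (lfp Phi).
  by apply: lfp_prefixed => X Y XY st; rewrite /Phi; case: ifP => // _; apply: ert_mono.
apply: lfp_le; first exact/sepsum_ge0/g0/lfp_ge0.
move=> [s h] /=; case: ifP => bs.
  apply: le_trans (frC _ (@lfp_ge0 _) _) _.
  by apply: le_sepsum2r => a; have := pre (s, a); rewrite /Phi /= bs.
by apply: le_sepsum2r => a; have := pre (s, a); rewrite /Phi /= bs.
Qed.

End Frame.

End Runtimes.

Lemma mem_cat_forall (T : eqType) (P : T -> Prop) (s1 s2 : seq T) :
  (forall x, x \in s1 ++ s2 -> P x) ->
  (forall x, x \in s1 -> P x) /\ (forall x, x \in s2 -> P x).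
Proof. by move=> P12; split=> x xs; apply: P12; rewrite mem_cat xs ?orbT. Qed.

Theorem mainTheorem9 (V : finType) (C : prog V) (f g : runtime V) :
  nonneg_rt f -> nonneg_rt g ->
  (forall x, x \in modv C -> not_in_vars x g) ->
  rt_le (ert C (sepsum f g)) (sepsum (ert C f) g).
Proof.
move=> + g0; elim: C f
  => [e|x e|x e|e e'|x e|e|p hp C1 IH1 C2 IH2|b C1 IH1 C2 IH2|C1 IH1 C2 IH2|b C1 IH1]
  f f0 gmod.
- exact: sepsumA_le (tm_ge0 e) f0 g0.
- by apply: subst_sepsum_le; apply: gmod; rewrite mem_head.
- by apply: alloc_frame => //; apply: gmod; rewrite mem_head.
- exact: store_frame.
- by apply: lookup_frame => //; apply: gmod; rewrite mem_head.
- exact: sepsumA_le (pto_any_ge0 e) f0 g0.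
- have [g1 g2] := mem_cat_forall gmod.
  by apply: pchoice_frame => //; [apply: IH1 | apply: IH2].
- have [g1 g2] := mem_cat_forall gmod.
  by apply: ite_frame; [apply: IH1 | apply: IH2].
- have [g1 g2] := mem_cat_forall gmod.
  by apply: seq_frame; [exact: IH1 (ert_ge0 C2 f0) g1 | exact: IH2].
- by apply: while_frame => // X X0; apply: IH1.
Qed.
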